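(* The logic $\mathsf{CK}\oplus\mathsf{C}_\Diamond\oplus\mathsf{N}_\Diamond$ is a conservative extension of $\mathsf{CK}_\Box$: a $\Diamond$-free formula is derivable in $\mathsf{CK}\oplus\mathsf{C}_\Diamond\oplus\mathsf{N}_\Diamond$ if and only if it is a theorem of $\mathsf{CK}_\Box$.
   Context: Formulas: $\mathbf{L}$ is generated from a countably infinite set of propositional variables by $\varphi ::= p \mid \bot \mid \varphi\wedge\varphi \mid \varphi\vee\varphi \mid \varphi\to\varphi \mid \Box\varphi \mid \Diamond\varphi$. Axioms: $\mathsf{K}_\Box$: $\Box(\varphi\to\psi)\to(\Box\varphi\to\Box\psi)$; $\mathsf{K}_\Diamond$: $\Box(\varphi\to\psi)\to(\Diamond\varphi\to\Diamond\psi)$; $\mathsf{N}_\Diamond$: $\Diamond\bot\to\bot$; $\mathsf{C}_\Diamond$: $\Diamond(\varphi\vee\psi)\to\Diamond\varphi\vee\Diamond\psi$. For a set $\mathsf{Ax}$ of axioms, $\mathsf{CK}\oplus\mathsf{Ax}$ is the relation $\Gamma\vdash_{\mathsf{Ax}}\varphi$ inductively generated by: (Ax) $\Gamma\vdash\varphi$ whenever $\varphi$ is a substitution instance of an axiom of a standard Hilbert axiomatisation of intuitionistic propositional logic, of $\mathsf{K}_\Box$, of $\mathsf{K}_\Diamond$, or of an element of $\mathsf{Ax}$; (El) $\Gamma\vdash\varphi$ if $\varphi\in\Gamma$; (MP) from $\Gamma\vdash\varphi$ and $\Gamma\vdash\varphi\to\psi$ infer $\Gamma\vdash\psi$; (Nec)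 from $\emptyset\vdash\varphi$ infer $\Gamma\vdash\Box\varphi$. A formula is derivable if $\emptyset\vdash_{\mathsf{Ax}}\varphi$. $\mathsf{CK}_\Box$ is the logic on $\Diamond$-free formulas axiomatised by intuitionistic propositional logic plus $\mathsf{K}_\Box$, closed under modus ponens and necessitation. A logic is a conservative extension of $\mathsf{CK}_\Box$ if its derivable $\Diamond$-free formulas are exactly the theorems of $\mathsf{CK}_\Box$. *)

From Stdlib Require Import List.

Inductive form : Type :=
| Var : nat -> form
| Bot : form
| And : form -> form -> form
| Or  : form -> form -> form
| Imp : form -> form -> form
| Box : form -> form
| Dia : form -> form.

Inductive IPL_axiom : form -> Prop :=
| ipl_K  : forall A B, IPL_axiom (Imp A (Imp B A))
| ipl_S  : forall A B C, IPL_axiom (Imp (Imp A (Imp B C)) (Imp (Imp A B) (Imp A C)))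
| ipl_AE1 : forall A B, IPL_axiom (Imp (And A B) A)
| ipl_AE2 : forall A B, IPL_axiom (Imp (And A B) B)
| ipl_AI : forall A B, IPL_axiom (Imp A (Imp B (And A B)))
| ipl_OI1 : forall A B, IPL_axiom (Imp A (Or A B))
| ipl_OI2 : forall A B, IPL_axiom (Imp B (Or A B))
| ipl_OE : forall A B C, IPL_axiom (Imp (Imp A C) (Imp (Imp B C) (Imp (Or A B) C)))
| ipl_EFQ : forall A, IPL_axiom (Imp Bot A).

Inductive CK_axiom : form -> Prop :=
| ck_ipl : forall A, IPL_axiom A -> CK_axiom A
| ck_Kbox : forall A B, CK_axiom (Imp (Box (Imp A B)) (Imp (Box A) (Box B)))
| ck_Kdia : forall A B, CK_axiom (Imp (Box (Imp A B)) (Imp (Dia A) (Dia B))).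

Definition N_dia (A : form) : Prop := A = Imp (Dia Bot) Bot.
Definition C_dia (A : form) : Prop :=
  exists B C, A = Imp (Dia (Or B C)) (Or (Dia B) (Dia C)).

Inductive derives (Ax : form -> Prop) (Gamma : form -> Prop) : form -> Prop :=
| d_ax : forall A, CK_axiom A -> derives Ax Gamma A
| d_extra : forall A, Ax A -> derives Ax Gamma A
| d_el : forall A, Gamma A -> derives Ax Gamma A
| d_mp : forall A B, derives Ax Gamma A -> derives Ax Gamma (Imp A B) -> derives Ax Gamma B
| d_nec : forall A, derives Ax (fun _ => False) A -> derives Ax Gamma (Box A).

Definition derivable (Ax : form -> Prop) (A : form) : Prop :=
  derives Ax (fun _ => False) A.

Definition CN_dia (A : form) : Prop := C_dia A \/ N_dia A.

Fixpoint dia_free (A : form) : Prop :=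
  match A with
  | Var _ | Bot => True
  | And B C | Or B C | Imp B C => dia_free B /\ dia_free C
  | Box B => dia_free B
  | Dia _ => False
  end.

Inductive CKbox_thm : form -> Prop :=
| cb_ipl : forall A, dia_free A -> IPL_axiom A -> CKbox_thm A
| cb_Kbox : forall A B, dia_free A -> dia_free B ->
    CKbox_thm (Imp (Box (Imp A B)) (Imp (Box A) (Box B)))
| cb_mp : forall A B, CKbox_thm A -> CKbox_thm (Imp A B) -> CKbox_thm B
| cb_nec : forall A, CKbox_thm A -> CKbox_thm (Box A).

(* Replacing every subformula [Dia B] by [Bot] fixes diamond-free formulas and
   turns the instances of C_Dia and N_Dia into instances of ex falso, and those
   of K_Dia into weakenings of [Bot -> Bot]; all are theorems of CK_Box. As the
   translation commutes with modus ponens and necessitation, it maps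
   derivations to CK_Box proofs. Conversely, CK_Box is axiomatised by a subset
   of the axioms and rules of CK. *)

Fixpoint erase_dia (A : form) : form :=
  match A with
  | Var n => Var n
  | Bot => Bot
  | And B C => And (erase_dia B) (erase_dia C)
  | Or B C => Or (erase_dia B) (erase_dia C)
  | Imp B C => Imp (erase_dia B) (erase_dia C)
  | Box B => Box (erase_dia B)
  | Dia _ => Bot
  end.

Lemma dia_free_erase_dia : forall A, dia_free (erase_dia A).
Proof. induction A; simpl; auto. Qed.

Lemma erase_dia_id : forall A, dia_free A -> erase_dia A = A.
Proof.
  induction A; simpl; intros HA; try tauto.
  - destruct HA; rewrite IHA1, IHA2 by assumption; reflexivity.
  - destruct HA; rewrite IHA1, IHA2 by assumption; reflexivity.
  - destruct HA; rewrite IHA1, IHA2 by assumption; reflexivity.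
  - rewrite IHA by assumption; reflexivity.
Qed.

Lemma IPL_axiom_erase_dia : forall A, IPL_axiom A -> IPL_axiom (erase_dia A).
Proof. intros A HA; destruct HA; simpl; constructor. Qed.

Lemma CKbox_thm_efq : forall A, dia_free A -> CKbox_thm (Imp Bot A).
Proof. intros A HA; apply cb_ipl; [simpl; auto | constructor]. Qed.

Lemma CKbox_thm_weaken : forall A B,
  dia_free A -> dia_free B -> CKbox_thm B -> CKbox_thm (Imp A B).
Proof.
  intros A B HA HB HBthm.
  apply (cb_mp B); [exact HBthm |].
  apply cb_ipl; [simpl; auto | constructor].
Qed.

Lemma CKbox_thm_erase_dia_CK_axiom : forall A,
  CK_axiom A -> CKbox_thm (erase_dia A).
Proof.
  intros A HA; destruct HA as [A Hipl | A B | A B]; simpl.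
  - apply cb_ipl; [apply dia_free_erase_dia | apply IPL_axiom_erase_dia; exact Hipl].
  - apply cb_Kbox; apply dia_free_erase_dia.
  - apply CKbox_thm_weaken; simpl; auto using dia_free_erase_dia.
    apply CKbox_thm_efq; exact I.
Qed.

Lemma CKbox_thm_erase_dia_CN_dia : forall A,
  CN_dia A -> CKbox_thm (erase_dia A).
Proof.
  intros A [[B [C ->]] | ->]; simpl; apply CKbox_thm_efq; simpl; auto.
Qed.

Lemma CKbox_thm_erase_dia_derives : forall Gamma A,
  derives CN_dia Gamma A ->
  (forall B, Gamma B -> CKbox_thm (erase_dia B)) ->
  CKbox_thm (erase_dia A).
Proof.
  intros Gamma A D.
  induction D as [G C Hax | G C Hcn | G C HC | G C E _ IHC _ IHCE | G C _ IHC]; intros HGamma.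
  - apply CKbox_thm_erase_dia_CK_axiom; exact Hax.
  - apply CKbox_thm_erase_dia_CN_dia; exact Hcn.
  - apply HGamma; exact HC.
  - apply (cb_mp (erase_dia C)); [apply IHC | apply IHCE]; exact HGamma.
  - apply cb_nec, IHC; intros B [].
Qed.

Lemma derives_CKbox_thm : forall Ax Gamma A, CKbox_thm A -> derives Ax Gamma A.
Proof.
  intros Ax Gamma A HA; revert Gamma.
  induction HA as [A _ Hipl | A B _ _ | A B _ IHA _ IHAB | A _ IHA]; intros Gamma.
  - apply d_ax, ck_ipl; exact Hipl.
  - apply d_ax, ck_Kbox.
  - apply (d_mp _ _ A B); [apply IHA | apply IHAB].
  - apply d_nec, IHA.
Qed.

Theorem mainTheorem12 :
  forall A : form, dia_free A -> (derivable CN_dia A <-> CKbox_thm A).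
Proof.
  intros A HA; split.
  - intros D. rewrite <- (erase_dia_id A HA).
    apply (CKbox_thm_erase_dia_derives (fun _ => False)); [exact D | intros B []].
  - apply derives_CKbox_thm.
Qed.
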